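(* Let $G=C_2^3\oplus C_4$ and let $U$ be a minimal zero-sum sequence over $G$ with $|U|=\mathsf D(G)=7$. Then $3\notin\mathsf L\big(U(-U)\big)$.
   Context: $C_n$ denotes a cyclic group of order $n$ and $C_2^r$ an elementary abelian $2$-group of rank $r$. For a finite abelian group $G$, a sequence over $G$ is an element of the free abelian monoid $\mathcal F(G)$ with basis $G$ (a finite unordered list of elements of $G$, repetitions allowed, written multiplicatively); its length $|S|$ is its number of terms; for $S=g_1\cdots g_\ell$, $-S=(-g_1)\cdots(-g_\ell)$. $\mathcal B(G)$ is the monoid of zero-sum sequences over $G$. A minimal zero-sum sequence (atom) is a nonempty zero-sum sequence that is not a product of two nonempty zero-sum sequences. For $B\in\mathcal B(G)$, $\mathsf L(B)=\{k\in\mathbb N_0: B \text{ is a product of } k \text{ atoms}\}$. The Davenport constant $\mathsf D(G)$ is the maximal length of an atom over $G$. *)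

From mathcomp Require Import all_boot all_algebra.
Set Implicit Arguments. Unset Strict Implicit. Unset Printing Implicit Defensive.
Import GRing.Theory.
Local Open Scope ring_scope.

(* Sequences over an abelian group G are modelled by [seq G] taken up to
   permutation ([perm_eq]); the monoid product is concatenation. *)

Definition G := ('Z_2 * 'Z_2 * 'Z_2 * 'Z_4)%type.

Definition zero_sum (G : zmodType) (S : seq G) : bool := \sum_(g <- S) g == 0.

Definition atom (G : zmodType) (S : seq G) : Prop :=
  [/\ S != [::], zero_sum S &
      ~ exists S1 S2 : seq G, [/\ S1 != [::], S2 != [::], zero_sum S1,
                                  zero_sum S2 & perm_eq S (S1 ++ S2)]].

Definition negseq (G : zmodType) (S : seq G) : seq G := map (fun g => - g) S.

Definition in_L (G : zmodType) (B : seq G) (k : nat) : Prop :=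
  exists As : seq (seq G),
    [/\ size As = k, forall A, A \in As -> atom A & perm_eq B (flatten As)].

(* Suppose U(-U) = A_1 A_2 A_3.  Splitting each factor into its part taken
   from U and its part taken from -U gives A_i = X_i (-Y_i) with
   U = X_1 X_2 X_3 = Y_1 Y_2 Y_3 and sigma(X_i) = sigma(Y_i).  For each i:
   - if X_i and Y_i share an element g, then g(-g) divides the atom A_i,
     so A_i = g(-g) and X_i = Y_i = g;
   - otherwise X_i Y_i divides U, say U = X_i Y_i Z_i; Z_i is not empty
     (else the cofactor of A_i would be the atom -A_i, not a product of two
     atoms), so sigma(Z_i) = -2 sigma(X_i) is nonzero.
   In G every double lies in <e> = {0, e}, e = (0,0,0,2), so sigma(Z_i) = e.
   An atom of length 7 never contains e: G/<e> = C_2^4 has Davenport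
   constant 5, so five of the other six terms contain a nonempty subsequence
   with sum in <e>.  Hence |Z_i| >= 2, |X_i| + |Y_i| <= 5 and
   2 sigma(X_i) = e.  Counting lengths (the |X_i| + |Y_i| add up to 14)
   forces the second case for all three i, and then
   2 sigma(X_3) = -2 (sigma(X_1) + sigma(X_2)) = -(e + e) = 0, a contradiction. *)

From mathcomp Require Import all_boot all_algebra zify.
Set Implicit Arguments. Unset Strict Implicit. Unset Printing Implicit Defensive.
Import GRing.Theory.

Section Multisets.
Variable T : eqType.
Implicit Types (M N S U : seq T).

Lemma perm_cat_split (L1 L2 : seq T) M N : perm_eq (L1 ++ L2) (M ++ N) ->
  exists P Q P' Q', [/\ perm_eq M (P ++ Q), perm_eq N (P' ++ Q'),
                        perm_eq L1 (P ++ P') & perm_eq L2 (Q ++ Q')].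
Proof.
elim: L1 M N => [|x L1 IH] M N /= pL.
  by exists [::], M, [::], N; split; rewrite ?perm_refl // perm_sym.
have: x \in M ++ N by rewrite -(perm_mem pL) inE eqxx.
rewrite mem_cat => /orP[xM | xN].
- have pM := perm_to_rem xM.
  have [|P [Q [P' [Q' [hM hN h1 h2]]]]] := IH (rem x M) N.
    by rewrite -(perm_cons x) (perm_trans pL) // -cat_cons perm_cat2r.
  exists (x :: P), Q, P', Q'; split=> //; first by rewrite (perm_trans pM) ?perm_cons.
  by rewrite /= perm_cons.
- have pN := perm_to_rem xN.
  have [|P [Q [P' [Q' [hM hN h1 h2]]]]] := IH M (rem x N).
    rewrite -(perm_cons x) (perm_trans pL) // perm_sym -cat1s.
    by rewrite (perm_catCA [:: x] M) perm_cat2l perm_sym perm_to_rem.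
  exists P, Q, (x :: P'), Q'; split=> //; first by rewrite (perm_trans pN) ?perm_cons.
  by rewrite perm_sym -cat1s (perm_catCA P [:: x]) /= perm_cons perm_sym.
Qed.

Lemma submset_complement S U : (forall x, count_mem x S <= count_mem x U) ->
  exists R, perm_eq U (S ++ R).
Proof.
case/count_subseqP=> s /perm_to_subseq[R pU] pS.
by exists R; rewrite (perm_trans pU) // perm_cat2r perm_sym.
Qed.

Lemma count_mem_cat_le x S R U : perm_eq U (S ++ R) -> count_mem x S <= count_mem x U.
Proof. by move/permP=> ->; rewrite count_cat leq_addr. Qed.

End Multisets.

Lemma pigeonhole (T T' : finType) (f : T -> T') :
  #|T'| < #|T| -> exists x y, x != y /\ f x = f y.
Proof.
move=> ltT'T.
have [/existsP[x /existsP[y /andP[xy /eqP fxy]]] | noColl] :=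
  boolP [exists x, exists y, (x != y) && (f x == f y)]; first by exists x, y.
suff /leq_card : injective f by rewrite leqNgt ltT'T.
move=> x y fxy; apply/eqP; apply: contraR noColl => xy.
by apply/existsP; exists x; apply/existsP; exists y; rewrite xy fxy eqxx.
Qed.

Local Open Scope ring_scope.

Section SubsetSums.
Variable V : zmodType.
Variable W : seq V.

Definition subseq_at (D : {set 'I_(size W)}) : seq V := [seq W`_i | i : 'I_(size W) <- enum D].

Lemma perm_subseq_at D : perm_eq W (subseq_at D ++ subseq_at (~: D)).
Proof.
have pE : perm_eq (enum D ++ enum (~: D)) (enum 'I_(size W)).
  rewrite enumT /enum_mem (@eq_filter _ (mem (~: D)) (predC (mem D))).
    by rewrite perm_filterC.
  by move=> i; rewrite /= in_setC.
have eW : [seq W`_i | i : 'I_(size W) <- enum 'I_(size W)] = W.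
  by rewrite (map_comp (nth 0 W) val) val_enum_ord -[RHS](mkseq_nth 0).
by rewrite perm_sym /subseq_at -map_cat (permPl (perm_map _ pE)) eW.
Qed.

Lemma sum_subseq_at D : \sum_(g <- subseq_at D) g = \sum_(i in D) W`_i.
Proof. by rewrite big_map big_enum. Qed.

Lemma size_subseq_at D : size (subseq_at D) = #|D|.
Proof. by rewrite size_map cardE. Qed.

Lemma subset_sums_collide (T : finType) (f : V -> T) : (#|T| < 2 ^ size W)%N ->
  exists A B : {set 'I_(size W)},
    A != B /\ f (\sum_(i in A) W`_i) = f (\sum_(i in B) W`_i).
Proof.
have card_sets : #|{set 'I_(size W)}| = (2 ^ size W)%N.
  by rewrite -cardsT -powersetT card_powerset cardsT card_ord.
by move=> ltTW; apply: pigeonhole; rewrite card_sets.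
Qed.

End SubsetSums.

Section ZeroSumSequences.
Variable V : zmodType.
Implicit Types (s t U A C D X Y Z R : seq V).

Definition sigma s : V := \sum_(g <- s) g.

Lemma zero_sumE s : zero_sum s = (sigma s == 0).
Proof. by []. Qed.

Lemma sigma_cons x s : sigma (x :: s) = x + sigma s.
Proof. exact: big_cons. Qed.

Lemma sigma_seq1 x : sigma [:: x] = x.
Proof. exact: big_seq1. Qed.

Lemma sigma_cat s t : sigma (s ++ t) = sigma s + sigma t.
Proof. exact: big_cat. Qed.

Lemma sigma_perm s t : perm_eq s t -> sigma s = sigma t.
Proof. exact: perm_big. Qed.

Lemma sigma_negseq s : sigma (negseq s) = - sigma s.
Proof. by rewrite /sigma big_map sumrN. Qed.

Lemma negseqK : involutive (@negseq V).
Proof. by move=> s; rewrite /negseq -map_comp map_id_in // => x _ /=; rewrite opprK. Qed.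

Lemma perm_negseq s t : perm_eq s t -> perm_eq (negseq s) (negseq t).
Proof. exact: perm_map. Qed.

Lemma atom_zero_sum A : atom A -> sigma A = 0.
Proof. by case=> _; rewrite zero_sumE => /eqP. Qed.

Lemma atom_proper U S R : atom U -> perm_eq U (S ++ R) -> S != [::] -> R != [::] -> sigma S != 0.
Proof.
move=> [_ zU indec] pU nS nR; apply/eqP => zS; apply: indec; exists S, R; split=> //.
- by rewrite zero_sumE zS.
- by move: zU; rewrite !zero_sumE (sigma_perm pU) sigma_cat zS add0r.
Qed.

Lemma atom_negseq A : atom A -> atom (negseq A).
Proof.
case=> nA zA indec; split.
- by case: A nA {zA indec}.
- by rewrite zero_sumE sigma_negseq oppr_eq0.
case=> S1 [S2 [n1 n2 z1 z2 p]]; apply: indec; exists (negseq S1), (negseq S2); split.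
- by case: S1 n1 {z1 p}.
- by case: S2 n2 {z2 p}.
- by rewrite zero_sumE sigma_negseq oppr_eq0.
- by rewrite zero_sumE sigma_negseq oppr_eq0.
- by rewrite -[A]negseqK -map_cat perm_negseq.
Qed.

Lemma negseq_cat s t : negseq (s ++ t) = negseq s ++ negseq t.
Proof. exact: map_cat. Qed.

Lemma atom_with_opposites A X Y g : atom A -> perm_eq A (X ++ negseq Y) ->
  g \in X -> g \in Y -> X = [:: g] /\ Y = [:: g].
Proof.
move=> aA pA gX gY.
have pA' : perm_eq A ([:: g; - g] ++ (rem g X ++ negseq (rem g Y))).
  apply: perm_trans pA _; apply: perm_trans (perm_cat (perm_to_rem gX)
                                (perm_negseq (perm_to_rem gY))) _.
  by rewrite /= perm_cons -cat1s (perm_catCA (rem g X) [:: - g]).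
have rest0 : rem g X ++ negseq (rem g Y) = [::].
  apply/eqP; apply: contraT => nR; have := atom_proper aA pA' isT nR.
  by rewrite sigma_cons sigma_seq1 subrr eqxx.
have [X0 Y0] : rem g X = [::] /\ rem g Y = [::].
  by case: (rem g X) rest0 => //; case: (rem g Y).
have := perm_to_rem gX; have := perm_to_rem gY; rewrite X0 Y0 => pY pX.
by split; apply: perm_small_eq.
Qed.

(* If U(-U) = ACD with atoms A, C, D and A = X(-Y), then U <> XY: otherwise
   CD = -A, which is an atom. *)
Lemma cofactor_not_negseq U A C D X Y : atom A -> atom C -> atom D ->
  perm_eq (U ++ negseq U) (A ++ C ++ D) -> perm_eq A (X ++ negseq Y) ->
  ~ perm_eq U (X ++ Y).
Proof.
move=> aA [nC zC _] [nD zD _] pB pA pU.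
have pAA : perm_eq (A ++ C ++ D) (A ++ negseq A).
  rewrite -(permPl pB) (permPl (perm_cat pU (perm_negseq pU))) perm_sym.
  rewrite (permPl (perm_cat pA (perm_negseq pA))) !negseq_cat negseqK.
  rewrite (perm_catACA X (negseq Y)) perm_sym (perm_catACA X Y) perm_cat2l.
  by rewrite perm_catC.
case: (atom_negseq aA) => _ _; apply; exists C, D; split=> //.
by rewrite perm_sym -(perm_cat2l A).
Qed.

Lemma atom_piece U A C D X Y rX rY : atom U -> atom A -> atom C -> atom D ->
  perm_eq (U ++ negseq U) (A ++ C ++ D) -> perm_eq A (X ++ negseq Y) ->
  perm_eq U (X ++ rX) -> perm_eq U (Y ++ rY) ->
  (exists g, X = [:: g] /\ Y = [:: g]) \/
  exists Z, [/\ perm_eq U (X ++ Y ++ Z), sigma Z != 0 & sigma Z = - sigma X *+ 2].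
Proof.
move=> aU aA aC aD pB pA pX pY.
have [/hasP[g gX gY] | disjXY] := boolP (has (mem Y) X).
  by left; exists g; apply: atom_with_opposites aA pA gX gY.
right.
have [Z pZ] : exists Z, perm_eq U ((X ++ Y) ++ Z).
  apply: submset_complement => x; rewrite count_cat.
  have [xX | /count_memPn->] := boolP (x \in X); last exact: count_mem_cat_le pY.
  have /count_memPn-> : x \notin Y by apply: (hasPn disjXY).
  by rewrite addn0 (count_mem_cat_le _ pX).
have sXY : sigma X = sigma Y.
  by apply/eqP; rewrite -subr_eq0 -sigma_negseq -sigma_cat -(sigma_perm pA) atom_zero_sum.
have nXY : X ++ Y != [::].
  case: aA => nA _ _; apply: contra nA; rewrite -!size_eq0 (perm_size pA) !size_cat.
  by rewrite size_map.
have nZ : Z != [::].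
  apply: contra_notN (cofactor_not_negseq aA aC aD pB pA) => /eqP Z0.
  by rewrite -(cats0 (X ++ Y)) -Z0.
exists Z; split; first by rewrite catA.
  by apply: (atom_proper aU _ nZ nXY); rewrite (permPl pZ) perm_catC.
have := atom_zero_sum aU; rewrite (sigma_perm pZ) !sigma_cat -sXY => zU.
by apply/eqP; rewrite -subr_eq0 mulNrn opprK mulr2n addrC zU.
Qed.

Lemma three_way_split U A1 A2 A3 : perm_eq (U ++ negseq U) (A1 ++ A2 ++ A3) ->
  exists X1 X2 X3 Y1 Y2 Y3,
  [/\ perm_eq U (X1 ++ X2 ++ X3), perm_eq U (Y1 ++ Y2 ++ Y3),
      perm_eq A1 (X1 ++ negseq Y1), perm_eq A2 (X2 ++ negseq Y2)
    & perm_eq A3 (X3 ++ negseq Y3)].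
Proof.
move=> pB.
have [X1 [N1 [P [N [pA1 pA23 pU pNU]]]]] := perm_cat_split pB.
have pPN : perm_eq (P ++ N) (A2 ++ A3) by rewrite perm_sym.
have [X2 [N2 [X3 [N3 [pA2 pA3 pP pN]]]]] := perm_cat_split pPN.
exists X1, X2, X3, (negseq N1), (negseq N2), (negseq N3); rewrite !negseqK; split=> //.
- by rewrite (permPl pU) perm_cat2l.
- by rewrite -[U]negseqK -!negseq_cat perm_negseq // (permPl pNU) perm_cat2l.
Qed.

End ZeroSumSequences.

(* The element e of G: 2G = <e> = {0, e}. *)
Definition e : G := (0, 0, 0, 2%:R).

Definition in_E (x : G) : bool := (x == 0) || (x == e).

(* The quotient map G -> G/<e>, where G/<e> = C_2^3 (+) C_2. *)
Definition quot (x : G) : 'Z_2 * 'Z_2 * 'Z_2 * bool := (x.1, odd x.2).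

(* An explicit, computable enumeration of 'Z_n and of G, used to check
   identities in G by evaluation. *)
Definition residues (n : nat) : seq 'Z_n := [seq i%:R | i <- iota 0 (Zp_trunc n).+2].

Lemma mem_residues n (a : 'Z_n) : a \in residues n.
Proof. by rewrite -[a]natr_Zp; apply: map_f; rewrite mem_iota ltn_ord. Qed.

Definition elements : seq G :=
  [seq (x, d) | x <- [seq (y, c) | y <- [seq (a, b) | a <- residues 2, b <- residues 2],
                                   c <- residues 2], d <- residues 4].

Lemma mem_elements (x : G) : x \in elements.
Proof. by case: x => [[[a b] c] d]; rewrite !allpairs_f ?mem_residues. Qed.

Lemma forall_G (P : pred G) : all P elements -> forall x, P x.
Proof. by move=> /allP allP x; apply: allP (mem_elements x). Qed.

Lemma forall2_G (P : G -> G -> bool) :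
  all (fun x => all (P x) elements) elements -> forall x y, P x y.
Proof. by move=> H x; apply: forall_G; apply: forall_G H x. Qed.

Lemma double_in_E (x : G) : in_E (x *+ 2).
Proof. by move: x; apply: forall_G; vm_compute. Qed.

Lemma e_double : e *+ 2 = 0.
Proof. by apply/eqP; vm_compute. Qed.

Lemma quot_kernel (x y : G) : quot x = quot y -> in_E (x - y).
Proof.
have kernel : forall x y, (quot x == quot y) ==> in_E (x - y).
  by apply: forall2_G; vm_compute.
by move=> /eqP; apply/implyP/kernel.
Qed.

Lemma in_E_add (x y : G) : in_E x -> in_E y -> in_E (x + y).
Proof.
by move=> /orP[]/eqP-> /orP[]/eqP->; rewrite /in_E ?addr0 ?add0r -?mulr2n ?e_double eqxx ?orbT.
Qed.

(* Since G/<e> has exponent 2, equal images of c + a and c + b force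
   a + b into <e>. *)
Lemma quot_translate (c a b : G) : quot (c + a) = quot (c + b) -> in_E (a + b).
Proof.
move=> /quot_kernel; rewrite opprD addrACA subrr add0r => kab.
by rewrite -[a](subrK b) -addrA -mulr2n in_E_add ?double_in_E.
Qed.

(* Nonzero doubles are all equal to e, so their sum vanishes. *)
Lemma doubles_add (x y : G) : x *+ 2 != 0 -> y *+ 2 != 0 -> (x + y) *+ 2 = 0.
Proof.
have double_e z : z *+ 2 != 0 -> z *+ 2 = e.
  by have /orP[/eqP-> | /eqP->] := double_in_E z; rewrite ?eqxx.
by move=> /double_e dx /double_e dy; rewrite mulrnDl dx dy -mulr2n e_double.
Qed.

(* D(C_2^4) = 5: any five elements of G contain a nonempty subsequence with
   sum in <e>.  It is the symmetric difference of two index sets whose sums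
   have the same image in G/<e>. *)
Lemma short_subsum_in_E (W : seq G) : size W = 5%N ->
  exists S R, [/\ perm_eq W (S ++ R), S != [::] & in_E (sigma S)].
Proof.
move=> sW.
have [|A [B [neAB eqAB]]] := subset_sums_collide (W := W) quot.
  by rewrite !card_prod !card_ord card_bool sW.
pose D := (A :\: B) :|: (B :\: A).
exists (subseq_at D), (subseq_at (~: D)); split; first exact: perm_subseq_at.
  rewrite -size_eq0 size_subseq_at cards_eq0 setU_eq0 !setD_eq0.
  by apply: contra neAB => /andP[AB BA]; rewrite eqEsubset AB BA.
have sumD : \sum_(i in D) W`_i = \sum_(i in B :\: A) W`_i + \sum_(i in A :\: B) W`_i.
  rewrite (big_setID (A := D) B); congr (_ + _); apply: eq_bigl => i; rewrite !inE.
    by case: (i \in A); case: (i \in B).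
  by case: (i \in A); case: (i \in B).
rewrite /sigma sum_subseq_at sumD; apply: (quot_translate (c := \sum_(i in A :&: B) W`_i)).
by rewrite -(big_setID (A := A) B) setIC -(big_setID (A := B) A) eqAB.
Qed.

(* An atom of length 7 does not contain e: among five of its other terms some
   nonempty S has sum 0 or e, and then S or eS is a proper zero-sum part. *)
Lemma atom7_no_e (U : seq G) : atom U -> size U = 7%N -> e \notin U.
Proof.
move=> aU sU; apply/negP => eU.
have pU := perm_to_rem eU; set V := rem e U in pU.
have sV : size V = 6%N by rewrite size_rem // sU.
have [|S [R [pS nS ES]]] := @short_subsum_in_E (take 5 V); first by rewrite size_take sV.
have nL : drop 5 V != [::] by rewrite -size_eq0 size_drop sV.
have pU' : perm_eq U (e :: S ++ R ++ drop 5 V).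
  by rewrite (permPl pU) perm_cons -[V in perm_eq V _](cat_take_drop 5) catA perm_cat2r.
case/orP: ES => /eqP sS.
  have pU'' : perm_eq U (S ++ e :: R ++ drop 5 V).
    by rewrite (permPl pU') -cat1s (perm_catCA [:: e] S).
  by have := atom_proper aU pU'' nS isT; rewrite sS eqxx.
have nRL : R ++ drop 5 V != [::] by case: (R).
have := @atom_proper _ U (e :: S) _ aU pU' isT nRL.
by rewrite sigma_cons sS -mulr2n e_double eqxx.
Qed.

(* The second shape of atom_piece has sigma(Z) = e, hence |Z| >= 2 since e is
   not a term of U. *)
Lemma long_piece (U X Y Z : seq G) : atom U -> size U = 7%N ->
  perm_eq U (X ++ Y ++ Z) -> sigma Z != 0 -> sigma Z = - sigma X *+ 2 ->
  (size X + size Y <= 5)%N /\ sigma X *+ 2 != 0.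
Proof.
move=> aU sU pU nZ dZ.
split; last by apply: contra nZ; rewrite dZ mulNrn oppr_eq0.
have Ze : sigma Z = e.
  by have := double_in_E (- sigma X); rewrite -dZ /in_E (negbTE nZ) => /eqP.
suff gtZ : (1 < size Z)%N.
  have sizes : (size X + (size Y + size Z) = 7)%N by rewrite -!size_cat -(perm_size pU).
  lia.
case: Z pU nZ Ze {dZ} => [|z [|? ?]] // pU nZ.
  by rewrite /sigma big_nil eqxx in nZ.
rewrite sigma_seq1 => ze.
by have := atom7_no_e aU sU; rewrite (perm_mem pU) !mem_cat -ze mem_seq1 eqxx !orbT.
Qed.

Definition short_or_doubling (X Y : seq G) : Prop :=
  (size X = 1 /\ size Y = 1)%N \/ ((size X + size Y <= 5)%N /\ sigma X *+ 2 != 0).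

Lemma piece_shape (U A C D X Y rX rY : seq G) : atom U -> size U = 7%N ->
  atom A -> atom C -> atom D -> perm_eq (U ++ negseq U) (A ++ C ++ D) ->
  perm_eq A (X ++ negseq Y) -> perm_eq U (X ++ rX) -> perm_eq U (Y ++ rY) ->
  short_or_doubling X Y.
Proof.
move=> aU sU aA aC aD pB pA pX pY.
have [[g [-> ->]] | [Z [pZ nZ dZ]]] := atom_piece aU aA aC aD pB pA pX pY; first by left.
by right; apply: long_piece aU sU pZ nZ dZ.
Qed.

(* Three such factors cannot recompose U twice: the lengths force all three
   to be doubling, and then 2 sigma(X_3) = -2 (sigma(X_1) + sigma(X_2)) = 0. *)
Lemma pieces_incompatible (X1 X2 X3 Y1 Y2 Y3 : seq G) :
  (size X1 + size X2 + size X3 = 7)%N -> (size Y1 + size Y2 + size Y3 = 7)%N ->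
  sigma X1 + sigma X2 + sigma X3 = 0 ->
  short_or_doubling X1 Y1 -> short_or_doubling X2 Y2 -> short_or_doubling X3 Y3 -> False.
Proof.
move=> sX sY s0 [[? ?]|[? d1]] [[? ?]|[? d2]] [[? ?]|[? d3]]; try lia.
have X3E : sigma X3 = - (sigma X1 + sigma X2) by apply/eqP; rewrite -addr_eq0 addrC s0.
by rewrite X3E mulNrn doubles_add // oppr0 eqxx in d3.
Qed.

Local Close Scope ring_scope.

Theorem lemma5p6 (U : seq G) :
  atom U -> size U = 7 -> ~ in_L (U ++ negseq U) 3.
Proof.
move=> aU sU [As [sAs atoms pB]].
case: As sAs atoms pB => [|A1 [|A2 [|A3 [|? ?]]]] //= _ atoms; rewrite cats0 => pB.
have [a1 a2 a3] : [/\ atom A1, atom A2 & atom A3].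
  by split; apply: atoms; rewrite !inE eqxx ?orbT.
have [X1 [X2 [X3 [Y1 [Y2 [Y3 [pX pY pA1 pA2 pA3]]]]]]] := three_way_split pB.
apply: (pieces_incompatible (X1 := X1) (X2 := X2) (X3 := X3) (Y1 := Y1) (Y2 := Y2) (Y3 := Y3)).
- by rewrite -addnA -!size_cat -(perm_size pX).
- by rewrite -addnA -!size_cat -(perm_size pY).
- by rewrite -addrA -!sigma_cat -(sigma_perm pX) atom_zero_sum.
- exact: piece_shape aU sU a1 a2 a3 pB pA1 pX pY.
- apply: piece_shape aU sU a2 a1 a3 _ pA2 _ _.
  + by rewrite perm_sym (perm_catCA A2) perm_sym.
  + by rewrite (permPl pX) (perm_catCA X1).
  + by rewrite (permPl pY) (perm_catCA Y1).
- apply: piece_shape aU sU a3 a1 a2 _ pA3 _ _.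
  + by rewrite perm_sym perm_catC -catA perm_sym.
  + by rewrite (permPl pX) (catA X1) perm_catC.
  + by rewrite (permPl pY) (catA Y1) perm_catC.
Qed.
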